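(* Let $X\subset\mathbb{R}^n$ be a compact $n$-dimensional manifold and let $f_0,\ldots,f_{M-1}:X\to X$ be maps satisfying: for each $i\in\{0,\ldots,M-1\}$, (i) $f_i$ is continuously differentiable and almost everywhere a local diffeomorphism; (ii) $f_i$ has finitely many hyperbolic stable fixed points $x_i^0,\ldots,x_i^{L(i)-1}$; (iii) their basins $\mathcal{B}_i^j$ satisfy $\ell\big(X\setminus\bigcup_j\mathcal{B}_i^j\big)=0$; (iv) for all $k\in\{0,\ldots,M-1\}$ and $j\in\{0,\ldots,L(i)-1\}$ there is $P(i,j,k)\in\{0,\ldots,L(k)-1\}$ with $x_i^j\in\mathcal{B}_k^{P(i,j,k)}$. Consider the switching system $x[k+1]=f_{v[k]}(x[k])$ driven by $\mathbf{v}\in\{0,\ldots,M-1\}^{\mathbb{Z}}$. Let $m_{\min}$ and $\mathbf{v}$ be such that ($\mathbf{v}$ has minimum repetitions $m_i^-\geq m_{\min}$ for all $i$ and) for every entire attractor sequence $A$ for $\mathbf{v}$ there is a pullback attracting entire solution $\{\xi_A[k]\}$ with $\xi_A[k]\in\mathcal{B}^{A[k+1]}_{v[k+1]}$ for all $k$. Suppose there are $E$ distinct entire attractor sequences for $\mathbf{v}$. Then the echo index of the system for the input $\mathbf{v}$ is at least $E$.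
   Context: $\ell$ is Lebesgue measure; $\mathcal{B}_i^j$ is the basin of attraction of $x_i^j$ under $f_i$. Minimum repetition $m_i^-$: every maximal block of consecutive $i$'s in $\mathbf{v}$ has length at least $m_i^-$. An entire attractor sequence for $\mathbf{v}$ is $\{A[k]\}_{k\in\mathbb{Z}}$ with $A[k]\in\{0,\ldots,L(v[k])-1\}$ and $A[k]=P(v[k-1],A[k-1],v[k])$ for all $k$. An entire solution is a sequence $\{\xi[k]\}_{k\in\mathbb{Z}}\subset X$ with $\xi[k+1]=f_{v[k]}(\xi[k])$; it is pullback attracting if it attracts some neighbourhood of itself in the pullback sense (images under $f_{v[k-1]}\circ\cdots\circ f_{v[k-n]}$ of an $\epsilon$-ball about $\xi[k-n]$ converge to $\xi[k]$ as $n\to\infty$). The echo index $\mathcal{I}(\mathbf{v})$ is the smallest number $m$ of uniformly attracting entire solutions $\mathbf{x}_1,\ldots,\mathbf{x}_m$ such that the sets of initial states uniformly attracted to them together cover $X$ up to a set of zero Lebesgue measure. *)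

From HB Require Import structures.
From mathcomp Require Import all_boot all_order all_algebra.
From mathcomp Require Import all_classical all_reals all_analysis.
From mathcomp Require Import complex.
Set Implicit Arguments.
Unset Strict Implicit.
Unset Printing Implicit Defensive.
Import Order.TTheory GRing.Theory Num.Theory.
Import numFieldNormedType.Exports.
Local Open Scope classical_set_scope.
Local Open Scope ring_scope.

Section Defs.
Variables (R : realType) (n : nat).
Local Notation V := 'rV[R]_n.

Definition box (a b : V) : set V :=
  [set x | forall i : 'I_n, a ord0 i <= x ord0 i <= b ord0 i].
Definition box_vol (a b : V) : R :=
  \prod_(i < n) Num.max 0 (b ord0 i - a ord0 i).
Definition lnull (A : set V) : Prop :=
  forall e : R, 0 < e -> exists a b : nat -> V,
    A `<=` [set x | exists k, box (a k) (b k) x] /\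
    forall N, \sum_(k < N) box_vol (a k) (b k) < e.

Definition C1_on (U : set V) (F : V -> V) : Prop :=
  (forall x, U x -> differentiable F x) /\
  {within U, continuous (fun x => 'J F x)}.

(* closed half-space {y | y_0 >= 0} (all of R^0 when n = 0) *)
Definition halfspace : set V :=
  [set y | forall i : 'I_n, val i = 0%N -> 0 <= y ord0 i].

(* X is an n-dimensional C^1 submanifold (with boundary) of R^n:
   C^1 charts onto open subsets of the half-space *)
Definition C1_manifold_dim_n (X : set V) : Prop :=
  forall x, X x -> exists (U W : set V) (phi psi : V -> V),
    [/\ open U, open W, U x, phi @` U = W &
    [/\ C1_on U phi, C1_on W psi,
        (forall y, U y -> psi (phi y) = y),
        (forall z, W z -> phi (psi z) = z) &
        phi @` (U `&` X) = W `&` halfspace]].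

Definition local_diffeo_at (X : set V) (f : V -> V) (x : V) : Prop :=
  exists (U W : set V) (g : V -> V),
    [/\ open U, open W, U x, U `<=` X & 
    [/\ f @` U = W, C1_on U f, C1_on W g,
        (forall y, U y -> g (f y) = y) &
        (forall z, W z -> f (g z) = z)]].

Definition hyperbolic_stable_fixed_point (f : V -> V) (x : V) : Prop :=
  f x = x /\
  forall z : R[i], eigenvalue (map_mx (real_complex R) ('J f x)) z -> `|z| < 1.

Definition basin (X : set V) (f : V -> V) (x : V) : set V :=
  [set y | X y /\ (fun k : nat => iter k f y) @ \oo --> x].

Variable M : nat.

(* Phi f v k m = f_{v[k-1]} o ... o f_{v[k-m]} *)
Fixpoint Phi (f : 'I_M -> V -> V) (v : int -> 'I_M) (k : int) (m : nat)
  : V -> V :=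
  match m with
  | 0%N => id
  | m'.+1 => fun y => Phi f v k m' (f (v (k - (m'.+1)%:Z)) y)
  end.

Definition entire_solution (X : set V) (f : 'I_M -> V -> V) (v : int -> 'I_M)
  (xi : int -> V) : Prop :=
  forall k, X (xi k) /\ xi (k + 1) = f (v k) (xi k).

Definition pullback_attracting (X : set V) (f : 'I_M -> V -> V)
  (v : int -> 'I_M) (xi : int -> V) : Prop :=
  exists2 eps : R, 0 < eps & forall k : int, forall d : R, 0 < d ->
    exists N : nat, forall m : nat, (N <= m)%N -> forall y, X y ->
      `|y - xi (k - m%:Z)| < eps -> `|Phi f v k m y - xi k| < d.

Definition uniformly_attracting (X : set V) (f : 'I_M -> V -> V)
  (v : int -> 'I_M) (x : int -> V) : Prop :=
  exists2 dl : R, 0 < dl & forall d : R, 0 < d ->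
    exists N : nat, forall m : nat, (N <= m)%N -> forall (k : int) y, X y ->
      `|y - x (k - m%:Z)| < dl -> `|Phi f v k m y - x k| < d.

Definition UA_set (X : set V) (f : 'I_M -> V -> V) (v : int -> 'I_M)
  (x : int -> V) : set V :=
  [set y | X y /\ forall d : R, 0 < d -> exists N : nat,
     forall m : nat, (N <= m)%N -> forall k : int,
       `|Phi f v k m y - x k| < d].

Definition echo_index_ge (X : set V) (f : 'I_M -> V -> V) (v : int -> 'I_M)
  (E : nat) : Prop :=
  forall (m : nat) (xs : 'I_m -> int -> V),
    (forall p, entire_solution X f v (xs p) /\ uniformly_attracting X f v (xs p)) ->
    lnull (X `\` [set y | exists p, UA_set X f v (xs p) y]) ->
    (E <= m)%N.

Definition min_repetition (v : int -> 'I_M) (i : 'I_M) (m : nat) : Prop :=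
  forall a b : int, a <= b ->
    (forall k, a <= k <= b -> v k = i) -> v (a - 1) != i -> v (b + 1) != i ->
    (m%:Z <= b - a + 1).

Variable L : 'I_M -> nat.
Definition attractor_sequence
  (P : forall i : 'I_M, 'I_(L i) -> forall k : 'I_M, 'I_(L k))
  (v : int -> 'I_M) (A : forall k : int, 'I_(L (v k))) : Prop :=
  forall k : int, A k = P (v (k - 1)) (A (k - 1)) (v k).

End Defs.
Arguments attractor_sequence [M L] P v A.

From HB Require Import structures.
From mathcomp Require Import all_boot all_order all_algebra.
From mathcomp Require Import all_classical all_reals all_analysis.
From mathcomp Require Import complex.
From mathcomp Require Import measurable_realfun.
From mathcomp Require Import lra zify.
Set Implicit Arguments.
Unset Strict Implicit.
Unset Printing Implicit Defensive.
Import Order.TTheory GRing.Theory Num.Theory.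
Import numFieldNormedType.Exports.
Local Open Scope classical_set_scope.
Local Open Scope ring_scope.

(* Each entire attractor sequence A carries a pullback attracting solution
   xi_A, and distinct sequences give distinct solutions: xi_A[k] lies in the
   basin of the fixed point labelled A[k+1], and a point lies in only one
   basin.  On the other hand a pullback attracting solution belongs to every
   family of uniformly attracting solutions whose attraction sets cover X up
   to a null set.  By compactness xi_A[-m] clusters at some z in X; as X is an
   n-manifold, every neighbourhood of z contains a nondegenerate box inside X,
   which is not null, hence meets the attraction set of some member x_p.  A
   point y there is both pulled back onto xi_A and uniformly attracted to
   x_p, so xi_A = x_p.  Thus A |-> p is injective and the family has at least
   E members.  Boxes are shown not to be null by induction on the dimension,
   integrating the volumes of slices against Lebesgue measure on R. *)

Section BoxCover.
Variable R : realType.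
Local Notation lam := (@lebesgue_measure R).

(* Boxes of R^n are handled through their first n coordinates in R^nat, so
   that the dimension can change along the induction. *)
Definition nbox (n : nat) (a b : nat -> R) : set (nat -> R) :=
  [set x | forall i, (i < n)%N -> a i <= x i <= b i].

Definition nbox_vol (n : nat) (a b : nat -> R) : R :=
  \prod_(i < n) Num.max 0 (b i - a i).

Lemma nbox_vol_ge0 n a b : 0 <= nbox_vol n a b.
Proof. by apply: prodr_ge0 => i _; rewrite le_max lexx. Qed.

Lemma lebesgue_measure_itv_cc (c d : R) :
  lam `[c, d] = (Num.max 0 (d - c))%:E.
Proof.
rewrite lebesgue_measure_itv /= lte_fin.
have [cd|dc] := ltP c d.
  by rewrite -EFinD; congr (_%:E); apply/esym/max_idPr; rewrite subr_ge0 ltW.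
by congr (_%:E); apply/esym/max_idPl; rewrite subr_le0.
Qed.

Local Open Scope ereal_scope.

(* The filter [w] lets the induction discard the boxes that a slice misses. *)
Definition nbox_cover_bound (n : nat) : Prop :=
  forall (a b : nat -> R) (c d : nat -> nat -> R) (w : pred nat),
    (forall x, nbox n a b x -> exists k, w k /\ nbox n (c k) (d k) x) ->
    (nbox_vol n a b)%:E <= \sum_(k <oo) ((w k)%:R * nbox_vol n (c k) (d k))%:E.

Lemma nbox_cover_bound0 : nbox_cover_bound 0.
Proof.
move=> a b c d w cover.
have [k [wk _]] :=
  cover (fun=> 0%R) (fun i (i_lt0 : (i < 0)%N) => False_ind _ (notF i_lt0)).
have ge0 i : 0 <= ((w i)%:R * nbox_vol 0 (c i) (d i))%:E.
  by rewrite lee_fin mulr_ge0 ?nbox_vol_ge0.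
apply: le_trans (nneseries_lim_ge k.+1 (fun i _ _ => ge0 i)).
rewrite /nbox_vol big_ord0 big_nat_recr //= wk big_ord0 mulr1 leeDr //.
by rewrite sume_ge0.
Qed.

Section Slice.
Variables (n : nat) (a b : nat -> R) (c d : nat -> nat -> R) (w : pred nat).
Hypothesis cover :
  forall x, nbox n.+1 a b x -> exists k, w k /\ nbox n.+1 (c k) (d k) x.

Let G k t :=
  ((w k)%:R * nbox_vol n (c k) (d k) * \1_(`[c k n, d k n]%classic) t)%:E.

Lemma nbox_cover_slice t : nbox_cover_bound n -> (a n <= t <= b n)%R ->
  (nbox_vol n a b)%:E <= \sum_(k <oo) G k t.
Proof.
move=> IH abt.
pose w' k := w k && (c k n <= t <= d k n)%R.
rewrite (@eq_eseriesr _ _ (fun k => ((w' k)%:R * nbox_vol n (c k) (d k))%:E));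
  last first.
  move=> k _; rewrite /G /w' indicE.
  have -> : (t \in `[c k n, d k n]%classic) = (c k n <= t <= d k n)%R.
    by apply/idP/idP => [/set_mem|h]; rewrite ?inE /= in_itv.
  by case: (w k); case: (c k n <= t <= d k n)%R;
    rewrite /= ?mulr1 ?mul1r ?mulr0 ?mul0r.
apply: IH => y aby.
pose y' i := if i == n then t else y i.
have [|k [wk cdy']] := cover (x := y').
  move=> i; rewrite ltnS leq_eqVlt => /orP[/eqP ->|lt_in].
    by rewrite /y' eqxx.
  by rewrite /y' (ltn_eqF lt_in); apply: aby.
exists k; split; first by move: (cdy' n (ltnSn n)); rewrite /w' wk /y' eqxx.
by move=> i lt_in; move: (cdy' i (ltnW lt_in)); rewrite /y' (ltn_eqF lt_in).
Qed.

Lemma nbox_cover_integrate : nbox_cover_bound n ->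
  (nbox_vol n.+1 a b)%:E <=
    \sum_(k <oo) ((w k)%:R * nbox_vol n.+1 (c k) (d k))%:E.
Proof.
move=> IH.
have ge0 k : 0 <= ((w k)%:R * nbox_vol n.+1 (c k) (d k))%:E.
  by rewrite lee_fin mulr_ge0 ?nbox_vol_ge0.
rewrite /nbox_vol big_ord_recr /= -/(nbox_vol n a b).
have [ba|ab] := ltP (b n) (a n).
  rewrite (_ : Num.max _ _ = 0%R) ?mulr0 ?nneseries_ge0 //.
  by apply/max_idPl; rewrite subr_le0 ltW.
pose D := `[a n, b n]%classic.
have mD : measurable D by exact: measurable_itv.
have G0 k t : 0 <= G k t by rewrite lee_fin !mulr_ge0 ?nbox_vol_ge0.
have mG k : measurable_fun D (G k).
  by apply/measurable_EFinP; apply: measurable_funM.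
rewrite EFinM -lebesgue_measure_itv_cc -/D -integral_cst //.
apply: (@le_trans _ _ (\int[lam]_(t in D) \sum_(k <oo) G k t)).
  apply: ge0_le_integral => //.
  - by move=> t _; rewrite lee_fin nbox_vol_ge0.
  - have := @ge0_emeasurable_sum _ _ R D G predT
      (fun k t _ _ => G0 k t) (fun k _ => mG k).
    by apply: eq_measurable_fun => t _; apply: eq_eseriesl => k; rewrite inE.
  - by move=> t Dt; apply: nbox_cover_slice; move: Dt; rewrite /D /= in_itv.
rewrite integral_nneseries //.
apply: lee_nneseries => [k _ _|k _]; first exact: integral_ge0.
have r0 : (0 <= (w k)%:R * nbox_vol n (c k) (d k))%R.
  by rewrite mulr_ge0 ?nbox_vol_ge0.
rewrite /G (@integralZl_indic _ _ _ lam D mD (fun=> `[c k n, d k n]%classic)) //;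
  last first.
  by rewrite ltNge r0.
rewrite integral_indic // big_ord_recr /= -/(nbox_vol n (c k) (d k)) mulrA !EFinM.
by apply: lee_wpmul2l; rewrite ?lee_fin // -lebesgue_measure_itv_cc measureIl.
Qed.

End Slice.

Lemma nbox_coverP n : nbox_cover_bound n.
Proof.
elim: n => [|n IH]; first exact: nbox_cover_bound0.
by move=> a b c d w cover; apply: nbox_cover_integrate.
Qed.

End BoxCover.

Section LebesgueNull.
Variables (R : realType) (n : nat).
Local Notation V := 'rV[R]_n.

Lemma lnullS (A B : set V) : A `<=` B -> lnull B -> lnull A.
Proof.
move=> AB nullB e e0; have [a [b [Bcov small]]] := nullB e e0.
by exists a, b; split => // x /AB /Bcov.
Qed.

Definition nat_of_row (a : V) : nat -> R :=
  fun i => if insub i is Some j then a ord0 j else 0.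

Lemma nat_of_rowE (a : V) (j : 'I_n) : nat_of_row a j = a ord0 j.
Proof. by rewrite /nat_of_row valK. Qed.

Lemma nbox_vol_of_row (a b : V) :
  nbox_vol n (nat_of_row a) (nat_of_row b) = box_vol a b.
Proof. by apply: eq_bigr => i _; rewrite !nat_of_rowE. Qed.

Lemma box_not_lnull (a b : V) :
  (forall i, a ord0 i < b ord0 i) -> ~ lnull (box a b).
Proof.
move=> ab /(_ (box_vol a b / 2)).
have vol_gt0 : 0 < box_vol a b.
  by apply: prodr_gt0 => i _; rewrite lt_max subr_gt0 ab orbT.
case=> [|c [d [cov small]]]; first by rewrite divr_gt0.
have cover y : nbox n (nat_of_row a) (nat_of_row b) y -> exists k,
    predT k /\ nbox n (nat_of_row (c k)) (nat_of_row (d k)) y.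
  move=> aby; pose z : V := \row_(j < n) y j.
  have [|k cdz] := cov z; first by move=> j; rewrite mxE -!nat_of_rowE; exact: aby.
  exists k; split => // i lt_in.
  by move: (cdz (Ordinal lt_in)); rewrite mxE -!(nat_of_rowE _ (Ordinal lt_in)).
have := nbox_coverP cover; rewrite nbox_vol_of_row => le_vol.
suff : (box_vol a b <= box_vol a b / 2)%R by lra.
rewrite -lee_fin; apply: (le_trans le_vol); apply: lime_le.
  by apply: is_cvg_nneseries => k _ _; rewrite lee_fin mul1r nbox_vol_ge0.
near=> N; rewrite sumEFin lee_fin big_mkord ltW // (le_lt_trans _ (small N)) //.
by apply: ler_sum => k _; rewrite mul1r nbox_vol_of_row.
Unshelve. all: by end_near. Qed.

End LebesgueNull.

Section RowSpace.
Variables (R : realType) (n : nat).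
Local Notation V := 'rV[R]_n.

Lemma row_entry_le_norm (u : V) i : `|u ord0 i| <= `|u|.
Proof.
rewrite [leRHS]/Num.norm /= mx_normrE.
exact: le_trans _ (le_bigmax _ _ (ord0, i)).
Qed.

Lemma row_norm_le (u : V) c : 0 <= c -> (forall i, `|u ord0 i| <= c) -> `|u| <= c.
Proof.
move=> c0 le_c; rewrite [leLHS]/Num.norm /= mx_normrE.
by apply/bigmax_leP; split => // -[i j] _ /=; rewrite (ord1 i).
Qed.

Lemma eq_of_dist_lt (u u' : V) : (forall e, 0 < e -> `|u - u'| < e) -> u = u'.
Proof.
move=> small; apply/eqP; rewrite -subr_eq0 -normr_le0 leNgt; apply/negP => gt0.
by have := small _ gt0; rewrite ltxx.
Qed.

Lemma continuous_dist_lt (W : normedModType R) (g : V -> W) x :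
  {for x, continuous g} -> forall e, 0 < e ->
  exists2 d, 0 < d & forall y, `|x - y| < d -> `|g x - g y| < e.
Proof.
move=> /cvgrPdist_lt cg e e0.
by have /nbhs_normP[d /= d0 gd] := cg e e0; exists d.
Qed.

Lemma open_dist_lt (U : set V) x : open U -> U x ->
  exists2 d, 0 < d & forall y, `|x - y| < d -> U y.
Proof.
move=> oU Ux.
by have /nbhs_normP[d /= d0 Ud] := open_nbhs_nbhs (conj oU Ux); exists d.
Qed.

Lemma box_centered_dist_le (u y : V) r : 0 <= r ->
  box (u - const_mx r) (u + const_mx r) y -> `|u - y| <= r.
Proof.
move=> r0 uy; apply: row_norm_le => // i.
by move: (uy i); rewrite !mxE ler_norml => /andP[] *; apply/andP; split; lra.
Qed.

(* Pushing [w] by [d/2] along the inward normal leaves room for a ball of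
   radius [d/4] inside the half-space. *)
Lemma halfspace_interior_near (w : V) d : halfspace w -> 0 < d ->
  exists w1, exists2 rho, 0 < rho &
    forall w2, `|w1 - w2| < rho -> `|w - w2| < d /\ halfspace w2.
Proof.
move=> hw d0; have d2_ge0 : 0 <= d / 2 by rewrite divr_ge0 // ltW.
pose w1 : V := \row_j (if val j == 0%N then w ord0 j + d / 2 else w ord0 j).
have ww1 : `|w - w1| <= d / 2.
  apply: row_norm_le => // i; rewrite !mxE; case: ifP => _.
    by rewrite opprD addrA subrr add0r normrN ger0_norm.
  by rewrite subrr normr0.
exists w1, (d / 4); first by rewrite divr_gt0.
move=> w2 w12; split.
  by rewrite -[w](subrK w1) -addrA (le_lt_trans (ler_normD _ _)) //; lra.
move=> i i0; have := hw i i0.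
have := le_lt_trans (row_entry_le_norm _ i) w12; rewrite !mxE i0 eqxx.
by rewrite ltr_norml => /andP[] *; lra.
Qed.

Lemma manifold_interior_near (X : set V) z r :
  C1_manifold_dim_n X -> X z -> 0 < r ->
  exists u, exists2 rho, 0 < rho &
    forall u', `|u - u'| < rho -> X u' /\ `|z - u'| < r.
Proof.
move=> manX Xz r0.
have [U [W [phi [psi [oU oW Uz phiUW [C1phi C1psi psiK _ phiX]]]]]] := manX z Xz.
have Ww : W (phi z) by rewrite -phiUW; exists z.
have [_ hw] : (W `&` @halfspace R n) (phi z) by rewrite -phiX; exists z.
have [d1 d10 psid1] :=
  continuous_dist_lt (differentiable_continuous (C1psi.1 _ Ww)) r0.
have [d2 d20 Wd2] := open_dist_lt oW Ww.
have d0 : 0 < Num.min d1 d2 by rewrite lt_min d10 d20.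
have [w1 [rho1 rho10 near_w1]] := halfspace_interior_near hw d0.
have chart_image w2 : `|w1 - w2| < rho1 ->
    (phi @` (U `&` X)) w2 /\ `|z - psi w2| < r.
  move=> /near_w1[]; rewrite lt_min => /andP[wd1 wd2] hw2.
  by rewrite phiX -{1}(psiK z Uz); split; [split => //; exact: Wd2 | exact: psid1].
have [|[u [Uu _] phiu] _] := chart_image w1; first by rewrite subrr normr0.
have [d3 d30 phid3] :=
  continuous_dist_lt (differentiable_continuous (C1phi.1 _ Uu)) rho10.
have [d4 d40 Ud4] := open_dist_lt oU Uu.
exists u, (Num.min d3 d4); first by rewrite lt_min d30 d40.
move=> u'; rewrite lt_min => /andP[ud3 ud4].
have Uu' := Ud4 _ ud4.
have w1u' : `|w1 - phi u'| < rho1 by rewrite -phiu; exact: phid3.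
have [[u'' [Uu'' Xu''] phiu''] zr] := chart_image _ w1u'.
rewrite psiK // in zr; split => //.
by rewrite -(psiK u' Uu') -phiu'' psiK.
Qed.

Lemma lnull_setD_dense (X S : set V) z r :
  C1_manifold_dim_n X -> lnull (X `\` S) -> X z -> 0 < r ->
  exists y, [/\ X y, S y & `|z - y| < r].
Proof.
move=> manX nullXS Xz r0.
have [u [rho rho0 near_u]] := manifold_interior_near manX Xz r0.
have box_near y : box (u - const_mx (rho / 2)) (u + const_mx (rho / 2)) y ->
    X y /\ `|z - y| < r.
  move=> /box_centered_dist_le uy; apply: near_u.
  by apply: le_lt_trans (uy _) _; rewrite ?divr_ge0 ?ltW //; lra.
apply: contrapT => noS.
apply: (@box_not_lnull _ _ (u - const_mx (rho / 2)) (u + const_mx (rho / 2))).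
  by move=> i; rewrite !mxE; lra.
apply: lnullS nullXS => y /box_near[Xy zy]; split => // Sy.
by apply: noS; exists y.
Qed.

Lemma compact_cluster_seq (X : set V) (u : nat -> V) :
  compact X -> (forall m, X (u m)) ->
  exists2 z, X z & forall N r, 0 < r -> exists2 m, (N <= m)%N & `|z - u m| < r.
Proof.
move=> cX Xu; have [|z [Xz clz]] := cX (u @ \oo) _ _.
  by exists 0%N => // m _; exact: Xu.
exists z => // N r r0.
have := clz [set u m | m in [set m | (N <= m)%N]] (ball z r).
case=> [|//|t [[m Nm <-] zum]]; first by exists N => // m Nm; exists m.
  exact: nbhsx_ballx.
by exists m => //; move: zum; rewrite -ball_normE.
Qed.

End RowSpace.

Section SwitchingSystem.
Variables (R : realType) (n M : nat) (X : set 'rV[R]_n).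
Variables (f : 'I_M -> 'rV[R]_n -> 'rV[R]_n) (v : int -> 'I_M).
Local Notation V := 'rV[R]_n.

Lemma pullback_limit_eq_UA (xi x : int -> V) eps y :
  (forall k d, 0 < d -> exists N : nat, forall m, (N <= m)%N -> forall y, X y ->
     `|y - xi (k - m%:Z)| < eps -> `|Phi f v k m y - xi k| < d) ->
  UA_set X f v x y ->
  (forall N, exists2 m, (N <= m)%N & `|y - xi (- m%:Z)| < eps) ->
  xi = x.
Proof.
(* The pullback images of y started at time k - m approach both xi k and x k. *)
move=> pb [Xy UAy] y_near; apply/funext => k; apply: eq_of_dist_lt => e e0.
have e20 : 0 < e / 2 by rewrite divr_gt0.
have [N1 pbN1] := pb k _ e20.
have [N2 UAN2] := UAy _ e20.
have [m' le_m' ym'] := y_near (N1 + N2 + absz k)%N.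
have m_ge0 : 0 <= k + m'%:Z by lia.
pose m := absz (k + m'%:Z).
have km : k - m%:Z = - m'%:Z by rewrite gez0_abs //; lia.
have [N1m N2m] : (N1 <= m)%N /\ (N2 <= m)%N by rewrite /m; lia.
have := pbN1 m N1m y Xy; rewrite km => /(_ ym') close_xi.
have close_x := UAN2 m N2m k.
rewrite -(subrK (Phi f v k m y) (xi k)) -addrA.
by rewrite (le_lt_trans (ler_normD _ _)) // distrC; lra.
Qed.

Lemma pullback_attracting_mem_family (xi : int -> V) (m : nat)
    (xs : 'I_m -> int -> V) :
  compact X -> C1_manifold_dim_n X ->
  entire_solution X f v xi -> pullback_attracting X f v xi ->
  lnull (X `\` [set y | exists p, UA_set X f v (xs p) y]) ->
  exists p, xi = xs p.
Proof.
move=> cX manX sol [eps eps0 pb] null.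
have eps20 : 0 < eps / 2 by rewrite divr_gt0.
have [z Xz clz] :=
  compact_cluster_seq (u := fun m : nat => xi (- m%:Z)) cX (fun m => (sol _).1).
have [y [Xy [p UAy] zy]] := lnull_setD_dense manX null Xz eps20.
exists p; apply: (pullback_limit_eq_UA pb UAy) => N.
have [m' Nm' zm'] := clz N _ eps20; exists m' => //.
rewrite -(subrK z y) -addrA (le_lt_trans (ler_normD _ _)) // distrC; lra.
Qed.

Lemma basin_labels_unique (L : 'I_M -> nat) (x : forall i, 'I_(L i) -> V)
    (xi : int -> V) (A A' : forall k, 'I_(L (v k))) :
  (forall i, injective (x i)) ->
  (forall k, basin X (f (v (k + 1))) (x (v (k + 1)) (A (k + 1))) (xi k)) ->
  (forall k, basin X (f (v (k + 1))) (x (v (k + 1)) (A' (k + 1))) (xi k)) ->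
  A = A'.
Proof.
move=> x_inj bA bA'; apply: functional_extensionality_dep => k.
have := bA (k - 1); have := bA' (k - 1); rewrite subrK => -[_ cA'] [_ cA].
exact: x_inj (cvg_unique (@norm_hausdorff _ _) cA cA').
Qed.

End SwitchingSystem.

Unset Implicit Arguments.

Theorem theorem1 (R : realType) (n : nat) (X : set 'rV[R]_n)
  (M : nat) (f : 'I_M -> 'rV[R]_n -> 'rV[R]_n) (U : 'I_M -> set 'rV[R]_n)
  (L : 'I_M -> nat) (x : forall i : 'I_M, 'I_(L i) -> 'rV[R]_n)
  (P : forall i : 'I_M, 'I_(L i) -> forall k : 'I_M, 'I_(L k))
  (v : int -> 'I_M) (mmin : nat) (mminus : 'I_M -> nat) (E : nat) :
  (* X is a compact n-dimensional manifold in R^n *)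
  compact X -> C1_manifold_dim_n X ->
  (* f_i : X -> X *)
  (forall i y, X y -> X (f i y)) ->
  (* (i) C^1 (on an open neighbourhood U i of X) and a.e. a local diffeomorphism *)
  (forall i, open (U i) /\ X `<=` U i /\ C1_on (U i) (f i)) ->
  (forall i, lnull (X `\` [set y | local_diffeo_at X (f i) y])) ->
  (* (ii) the hyperbolic stable fixed points of f_i are exactly the
     (distinct) points x i 0, ..., x i (L i - 1) *)
  (forall i j, X (x i j) /\ hyperbolic_stable_fixed_point (f i) (x i j)) ->
  (forall i, injective (x i)) ->
  (forall i y, X y -> hyperbolic_stable_fixed_point (f i) y ->
     exists j, y = x i j) ->
  (* (iii) the basins cover X up to a null set *)
  (forall i, lnull (X `\` [set y | exists j, basin X (f i) (x i j) y])) ->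
  (* (iv) *)
  (forall i j k, basin X (f k) (x k (P i j k)) (x i j)) ->
  (* minimum repetitions m_i^- >= m_min *)
  (forall i, (mmin <= mminus i)%N /\ min_repetition v i (mminus i)) ->
  (* pullback attracting entire solutions for each entire attractor sequence *)
  (forall A : forall k : int, 'I_(L (v k)), attractor_sequence P v A ->
     exists xi : int -> 'rV[R]_n,
       [/\ entire_solution X f v xi, pullback_attracting X f v xi &
           forall k : int, basin X (f (v (k + 1))) (x (v (k + 1)) (A (k + 1))) (xi k)]) ->
  (* there are exactly E distinct entire attractor sequences *)
  (exists As : 'I_E -> (forall k : int, 'I_(L (v k))),
     [/\ (forall p, attractor_sequence P v (As p)), injective As &
         forall A, attractor_sequence P v A -> exists p, A = As p]) ->
  echo_index_ge X f v E.
Proof.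
move=> cX manX _ _ _ _ x_inj _ _ _ _ pb_sols [As [As_seq As_inj _]] m xs _ null.
have [xi xiP] := choice (fun p => pb_sols (As p) (As_seq p)).
have [g xi_g] : {g : 'I_E -> 'I_m & forall p, xi p = xs (g p)}.
  apply: (@choice _ _ (fun p q => xi p = xs q)) => p; have [sol pb _] := xiP p.
  exact: pullback_attracting_mem_family cX manX sol pb null.
have g_inj : injective g.
  move=> p p' gpp'; apply: As_inj.
  have [_ _ basin_p] := xiP p; have [_ _ basin_p'] := xiP p'.
  rewrite xi_g gpp' -xi_g in basin_p.
  exact: basin_labels_unique x_inj basin_p basin_p'.
by have := leq_card g g_inj; rewrite !card_ord.
Qed.
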